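(* For every (labelled) tree $T$ there exists a $T$-peeling mapping.
   Context: For a tree $T$, let $\mathcal{S}(T)$ be the family of all subtrees of $T$ (connected subgraphs of $T$, which are trees). A mapping $\nu:\mathcal{S}(T)\to 2^{V(T)}$ is $T$-peeling if (i) $\nu(\{v\})=\{v\}$ for every single-vertex subtree $\{v\}$, $v\in V(T)$, and (ii) for every subtree $T'$ with $|V(T')|\ge 2$ we have $\nu(T')=\{u,w\}$ where $u,w$ are two distinct leaves of $T'$ such that $u\in\nu(T'-w)$ and $w\in\nu(T'-u)$. *)

From mathcomp Require Import all_boot.
Set Implicit Arguments. Unset Strict Implicit. Unset Printing Implicit Defensive.

Section Trees.
Variable V : finType.

Definition simple_graph (e : rel V) : Prop := symmetric e /\ irreflexive e.

Definition induced (e : rel V) (S : {set V}) : rel V :=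
  [rel x y | [&& x \in S, y \in S & e x y]].

Definition acyclic (e : rel V) : Prop :=
  forall c : seq V, 3 <= size c -> ~~ ucycleb e c.

Definition is_tree (e : rel V) : Prop :=
  [/\ simple_graph e, 0 < #|V|, (forall x y, connect e x y) & acyclic e].

(* subtrees of a tree, identified with their (nonempty) vertex sets inducing
   a connected subgraph; in a tree the induced subgraph is the only connected
   subgraph on such a vertex set. *)
Definition is_subtree (e : rel V) (S : {set V}) : Prop :=
  S != set0 /\ {in S &, forall x y, connect (induced e S) x y}.

Definition is_leaf (e : rel V) (S : {set V}) (u : V) : bool :=
  (u \in S) && (#|[set v in S | e u v]| == 1).

Definition peeling (e : rel V) (nu : {set V} -> {set V}) : Prop :=
  (forall v : V, nu [set v] = [set v]) /\
  (forall S : {set V}, is_subtree e S -> 2 <= #|S| ->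
     exists u w : V, [/\ u != w, is_leaf e S u, is_leaf e S w &
                        nu S = [set u; w]] /\
                     u \in nu (S :\ w) /\ w \in nu (S :\ u)).
End Trees.

From mathcomp Require Import all_boot.
Set Implicit Arguments. Unset Strict Implicit. Unset Printing Implicit Defensive.

(* In an acyclic graph both ends of a longest simple path of a subtree S are
   leaves of S: another neighbour of an end would either extend the path or
   close a cycle.  So S has two leaves once |S| >= 2.  Rank the vertices and
   let nu(S) be the two lowest-ranked leaves u < w of S.  Deleting a leaf b
   from S creates at most one new leaf, the unique neighbour of b.  Since no
   leaf of S lies below u, at most one leaf of S - w lies below u; since only
   u lies below w, at most one leaf of S - u lies below w.  (If u and w are
   adjacent, then S = {u, w} and S - w, S - u are singletons.) *)

Section SimplePaths.
Variables (T : finType) (r : rel T).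

Definition upath (s : seq T) : bool := uniq s && sorted r s.

Lemma upath_rev s : symmetric r -> upath s -> upath (rev s).
Proof.
move=> r_sym /andP[s_uniq s_sorted]; rewrite /upath rev_uniq s_uniq rev_sorted /=.
by rewrite (@eq_sorted _ _ r) // => x y; rewrite r_sym.
Qed.

Lemma exists_longest_upath s0 : upath s0 ->
  exists s, [/\ upath s, size s0 <= size s & forall t, upath t -> size t <= size s].
Proof.
move=> s0P; pose P n := [exists t : n.-tuple T, upath t].
have P_size t : upath t -> P (size t) by move=> tP; apply/existsP; exists (in_tuple t).
have P_bounded n : P n -> n <= #|T|.
  by case/existsP=> t /andP[t_uniq _]; rewrite -(size_tuple t) -(card_uniqP t_uniq) max_card.
have [n /existsP[s sP] s_max] := ex_maxnP (ex_intro P _ (P_size _ s0P)) P_bounded.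
exists s; rewrite size_tuple; split=> [//||t /P_size]; last exact: s_max.
exact: s_max (P_size _ s0P).
Qed.

End SimplePaths.

Section LowestTwo.
Variable T : finType.
Implicit Types (A : {set T}) (u w x : T).

Definition below (A : {set T}) (x : T) : {set T} :=
  [set y in A | enum_rank y < enum_rank x].

Definition lowest2 (A : {set T}) : {set T} := [set x in A | #|below A x| < 2].

Lemma exists_below_set0 A x0 : x0 \in A -> exists2 u, u \in A & below A u = set0.
Proof.
move=> x0A; have [u uA u_min] := arg_minnP (fun x => val (enum_rank x)) x0A.
exists u => //; apply/setP => y; rewrite !inE.
by apply/negbTE; rewrite negb_and -leqNgt -implybE; apply/implyP => /u_min.
Qed.

Lemma below_set0 A u x :
  u \in A -> below A u = set0 -> x \in A -> x != u -> u \in below A x.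
Proof.
move=> uA u_min xA xu.
have : x \notin below A u by rewrite u_min inE.
rewrite inE xA -leqNgt /= => ux; rewrite inE uA ltn_neqAle ux andbT.
by apply: contra xu => /eqP/val_inj/enum_rank_inj ->.
Qed.

Lemma lowest2_two A : 1 < #|A| -> exists u w,
  [/\ u != w, lowest2 A = [set u; w],
      below A u \subset [set w] & below A w \subset [set u]].
Proof.
case/card_gt1P=> a [b [aA bA ab]].
have [u uA u_min] := exists_below_set0 aA.
have [x1 x1A] : exists x1, x1 \in A :\ u.
  by have [<-|au] := eqVneq a u; [exists b | exists a]; rewrite !inE ?aA ?bA ?andbT // eq_sym.
have [w /setD1P[wu wA] w_min] := exists_below_set0 x1A.
have w_low : below A w \subset [set u].
  apply/subsetP => y; rewrite !inE => /andP[yA yw]; apply/negPn/negP => yu.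
  have : y \notin below (A :\ u) w by rewrite w_min inE.
  by rewrite !inE yu yA yw.
exists u, w; split=> //; first by rewrite eq_sym.
- apply/setP => x; rewrite !inE.
  have [->|xu] := eqVneq x u; first by rewrite uA u_min cards0.
  have [->|xw] := eqVneq x w.
    by rewrite wA (leq_ltn_trans (subset_leq_card w_low)) ?cards1.
  apply/negbTE; rewrite negb_and -leqNgt -implybE; apply/implyP => xA.
  have u_below : u \in below A x by exact: below_set0.
  have w_below : w \in below A x.
    have : w \in below (A :\ u) x by apply: below_set0; rewrite // !inE ?wu ?wA ?xu ?xA.
    by rewrite !inE wA => /andP[_ ->].
  have : [set u; w] \subset below A x by rewrite subUset !sub1set u_below w_below.
  by move/subset_leq_card; rewrite cards2 eq_sym wu.
- by rewrite u_min sub0set.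
Qed.

End LowestTwo.

Section TreeLeaves.
Variables (V : finType) (e : rel V).
Hypotheses (e_sym : symmetric e) (e_irr : irreflexive e) (e_acyclic : acyclic e).

Lemma induced_sym S : symmetric (induced e S).
Proof. by move=> x y; rewrite /induced /= andbCA e_sym. Qed.

Lemma is_leaf_adj_eq S a b z :
  is_leaf e S a -> b \in S -> e a b -> z \in S -> e a z -> z = b.
Proof.
case/andP=> _ /cards1P[c nbr_a] bS eab zS eaz.
have : b \in [set v in S | e a v] by rewrite inE bS eab.
have : z \in [set v in S | e a v] by rewrite inE zS eaz.
by rewrite nbr_a !inE => /eqP -> /eqP ->.
Qed.

Lemma adjacent_leaves_span S a b : is_subtree e S ->
  is_leaf e S a -> is_leaf e S b -> e a b -> S \subset [set a; b].
Proof.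
move=> [_ S_conn] a_leaf b_leaf eab.
have aS : a \in S by case/andP: a_leaf.
have bS : b \in S by case/andP: b_leaf.
have ab_closed : closed (induced e S) [set a; b].
  apply: (intro_closed (sym_connect_sym (induced_sym S))) => x y /and3P[_ yS exy].
  rewrite !inE => /orP[]/eqP xE; subst x.
  - by rewrite (is_leaf_adj_eq a_leaf bS eab yS exy) eqxx orbT.
  - by rewrite (is_leaf_adj_eq b_leaf aS _ yS exy) ?eqxx // e_sym.
apply/subsetP => x xS.
by rewrite -(closed_connect ab_closed (S_conn _ _ aS xS)) !inE eqxx.
Qed.

Lemma acyclic_path_chord x y q v :
  uniq [:: x, y & q] -> path e x (y :: q) -> v \in q -> ~~ e x v.
Proof.
move=> + + vq; case/splitPr: vq => q1 q2 xyq_uniq xyq_path; apply/negP => exv.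
move: xyq_path; rewrite -cat_rcons -cat_cons cat_path => /andP[cycle_path _].
move: xyq_uniq; rewrite -cat_rcons -2!cat_cons cat_uniq => /andP[cycle_uniq _].
have := e_acyclic (c := [:: x, y & rcons q1 v]); rewrite /= size_rcons => /(_ isT) /negP.
apply; rewrite /ucycleb cycle_uniq andbT /cycle rcons_path cycle_path.
by rewrite /= last_rcons e_sym.
Qed.

Lemma longest_upath_head_leaf S x p :
  upath (induced e S) (x :: p) -> 0 < size p ->
  (forall t, upath (induced e S) t -> size t <= (size p).+1) -> is_leaf e S x.
Proof.
case: p => [|y q] // /andP[xyq_uniq xyq_path] _ longest.
have /and3P[xS yS exy] : induced e S x y by case/andP: xyq_path.
rewrite /is_leaf xS; apply/cards1P; exists y; apply/setP => v; rewrite !inE.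
have [->|vy] := eqVneq v y; first by rewrite yS exy.
apply/negP => /andP[vS exv].
have [|v_new] := boolP (v \in [:: x, y & q]).
  rewrite !inE (negbTE vy) /= => /orP[/eqP vx | vq].
    by move: exv; rewrite vx e_irr.
  have induced_sub : subrel (induced e S) e by move=> a b /and3P[].
  have := acyclic_path_chord xyq_uniq (sub_path induced_sub xyq_path) vq.
  by rewrite exv.
suff : size [:: v, x, y & q] <= (size q).+2 by rewrite /= ltnn.
apply: longest.
rewrite /upath cons_uniq v_new xyq_uniq /=.
by move: xyq_path => /= ->; rewrite andbT /induced /= vS xS e_sym exv.
Qed.

Lemma subtree_two_leaves S : is_subtree e S -> 1 < #|S| ->
  exists a b, [/\ a != b, is_leaf e S a & is_leaf e S b].
Proof.
move=> [_ S_conn] /card_gt1P[a [b [aS bS ab]]].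
have [y ay] : exists y, induced e S a y.
  have /connectP[[|y p] /=] := S_conn a b aS bS; first by move=> _ ba; rewrite ba eqxx in ab.
  by case/andP=> ay _ _; exists y.
have ay_upath : upath (induced e S) [:: a; y].
  rewrite /upath /= ay !andbT inE; apply: contraTneq ay => <-.
  by rewrite /induced /= e_irr !andbF.
have [[|x [|y' q]] [s_upath s_size s_max]] := exists_longest_upath ay_upath => //.
have x_leaf := longest_upath_head_leaf s_upath isT s_max.
have last_leaf : is_leaf e S (last y' q).
  have rev_s : rev [:: x, y' & q] = last y' q :: rev (belast x (y' :: q)).
    by rewrite [x :: _]lastI rev_rcons.
  have rev_upath := upath_rev (induced_sym S) s_upath; rewrite rev_s in rev_upath.
  by apply: (longest_upath_head_leaf rev_upath); rewrite size_rev size_belast.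
exists x, (last y' q); split=> //.
move: s_upath => /andP[/= /andP[x_new _] _]; apply: contraNneq x_new => ->.
exact: mem_last.
Qed.

Lemma is_leaf_setD1 S b y :
  ~~ e y b -> y != b -> is_leaf e (S :\ b) y = is_leaf e S y.
Proof.
move=> not_eyb yb; rewrite /is_leaf !inE yb /=; congr (_ && (_ == 1)).
apply: eq_card => v; rewrite !inE.
by have [->|] := eqVneq v b; rewrite ?(negbTE not_eyb) ?andbF.
Qed.

Definition leaves (S : {set V}) : {set V} := [set x | is_leaf e S x].

Lemma mem_leaves S x : (x \in leaves S) = is_leaf e S x.
Proof. by rewrite inE. Qed.

Lemma leaves_setD1 S b :
  leaves (S :\ b) \subset (leaves S :\ b) :|: [set v in S | e b v].
Proof.
apply/subsetP => y; rewrite !inE => y_leaf.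
have /andP[/setD1P[yb yS] _] := y_leaf.
case eby: (e b y); first by rewrite yS orbT.
by rewrite yb -(is_leaf_setD1 S (b := b)) ?y_leaf // e_sym eby.
Qed.

Definition peel (S : {set V}) : {set V} :=
  if #|S| <= 1 then S else lowest2 (leaves S).

Lemma mem_peel_setD1 S a b : is_subtree e S -> is_leaf e S a -> is_leaf e S b ->
  a != b -> below (leaves S) a \subset [set b] -> a \in peel (S :\ b).
Proof.
move=> S_sub a_leaf b_leaf ab a_low; have aS : a \in S by case/andP: a_leaf.
rewrite /peel; case: leqP => [_|S_big]; first by rewrite !inE ab aS.
have not_eab : ~~ e a b.
  apply: contraTN S_big => eab; rewrite -leqNgt -(cards1 a) subset_leq_card //.
  apply/subsetP => x /setD1P[xb xS].
  have := subsetP (adjacent_leaves_span S_sub a_leaf b_leaf eab) x xS.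
  by rewrite !inE (negbTE xb) orbF.
have [c nbr_b] : exists c, [set v in S | e b v] = [set c] by apply/cards1P; case/andP: b_leaf.
rewrite inE mem_leaves is_leaf_setD1 // a_leaf /=.
suff : below (leaves (S :\ b)) a \subset [set c] by move/subset_leq_card; rewrite cards1.
apply/subsetP => y /setIdP[y_leaf ya].
have := subsetP (leaves_setD1 S b) y y_leaf; rewrite in_setU -nbr_b => /orP[|//].
case/setD1P=> yb y_leafS.
have : y \in [set b] by apply/(subsetP a_low)/setIdP.
by rewrite inE (negbTE yb).
Qed.

End TreeLeaves.

Theorem lemma4p3 (V : finType) (e : rel V) :
  is_tree e -> exists nu : {set V} -> {set V}, peeling e nu.
Proof.
case=> [[e_sym e_irr] _ _ e_acyclic]; exists (peel e); split=> [v|S S_sub S_big].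
  by rewrite /peel cards1.
have [a [b [ab a_leaf b_leaf]]] := subtree_two_leaves e_sym e_irr e_acyclic S_sub S_big.
have [|u [w [uw peel_S u_low w_low]]] := lowest2_two (A := leaves e S).
  by apply/card_gt1P; exists a, b; rewrite !mem_leaves.
have /setIdP[u_leaf _] : u \in lowest2 (leaves e S) by rewrite peel_S set21.
have /setIdP[w_leaf _] : w \in lowest2 (leaves e S) by rewrite peel_S set22.
rewrite !mem_leaves in u_leaf w_leaf.
exists u, w; split; [split=> // | split].
- by rewrite /peel leqNgt S_big.
- exact: mem_peel_setD1.
- by apply: mem_peel_setD1; rewrite // eq_sym.
Qed.
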